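(* Let $\mathcal P$ be a non-degenerate polar space of finite rank $n\ge2$ with no thin lines, and let $C=(X_\delta)_{\delta\le\omega}$ be a well ordered chain of nice subspaces of $\mathcal P$ (indexed by the ordinals $\delta\le\omega$, increasing) with $X_\omega=\mathcal P$. The following are equivalent: (a) $C$ is maximal among well ordered chains of $\mathfrak N(\mathcal P)$; (b) $C$ is maximal among all chains of $\mathfrak N(\mathcal P)$; (c) all the following hold: (1) $\langle F\rangle_{\mathcal P}=X_0$ for every frame $F$ of $X_0$; (2) for every $\delta<\omega$, $X_\delta$ is a maximal proper subspace of $X_{\delta+1}$; (3) for every limit ordinal $\gamma\le\omega$, $X_\gamma=\bigcup_{\delta<\gamma}X_\delta$.
   Context: A point-line geometry with each two points on at most one line; a subspace is a set of points containing every line meeting it in $\ge2$ points; $\langle S\rangle_{\mathcal P}$ is the smallest subspace containing $S$. Collinearity is written $\perp$. Singular subspaces are subspaces whose points are pairwise collinear (projective spaces); rank of $\mathcal P$ is the maximal projective rank (dimension $+1$) of a singular subspace. A nice subspace is a subspace containing two mutually disjoint maximal singular subspaces (equivalently $\mathcal P$ induces on it a non-degenerate polar space of rank $n$); $\mathfrak N(\mathcal P)$ is the set of nice subspaces ordered by inclusion. A frame is a pair of bases $\{p_1,\dots,p_n\}$, $\{p'_1,\dots,p'_n\}$ of two disjoint maximal singular subspaces with $p_i\perp p'_j$ iff $i\ne j$. *)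

From Stdlib Require Import List Arith.
Import ListNotations.
Set Implicit Arguments.
Unset Strict Implicit.

Section PolarSpace.
Variables (Point Line : Type) (inc : Point -> Line -> Prop).

Definition pset := Point -> Prop.
Definition subset (A B : pset) : Prop := forall x, A x -> B x.
Definition seteq (A B : pset) : Prop := forall x, A x <-> B x.
Definition fullset : pset := fun _ => True.

Definition point_line_geometry : Prop :=
  (forall L, exists p q, p <> q /\ inc p L /\ inc q L) /\
  (forall p q L M, p <> q -> inc p L -> inc q L -> inc p M -> inc q M -> L = M).

Definition no_thin_lines : Prop :=
  forall L, exists p q r, p <> q /\ p <> r /\ q <> r /\ inc p L /\ inc q L /\ inc r L.

Definition collinear (p q : Point) : Prop := p = q \/ exists L, inc p L /\ inc q L.

Definition subspace (S : pset) : Prop :=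
  forall L p q, p <> q -> inc p L -> inc q L -> S p -> S q ->
    forall r, inc r L -> S r.

Definition span (S : pset) : pset :=
  fun x => forall T, subspace T -> subset S T -> T x.

Definition singular (S : pset) : Prop :=
  subspace S /\ forall p q, S p -> S q -> collinear p q.

Definition max_singular (S : pset) : Prop :=
  singular S /\ forall T, singular T -> subset S T -> subset T S.

Definition lset (l : list Point) : pset := fun x => In x l.

Definition independent (l : list Point) : Prop :=
  NoDup l /\ forall x, In x l -> ~ span (fun y => In y l /\ y <> x) x.

Definition basis_of (S : pset) (l : list Point) : Prop :=
  independent l /\ seteq (span (lset l)) S.

(* Rank: the maximal projective rank (dimension + 1, i.e. size of a basis)
   of a singular subspace is n. *)
Definition has_rank (n : nat) : Prop :=
  (exists S l, singular S /\ basis_of S l /\ length l = n) /\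
  (forall S l, singular S -> independent l -> subset (lset l) S -> length l <= n).

(* Non-degenerate polar space (one-or-all axiom, no point collinear to all). *)
Definition polar_space : Prop :=
  point_line_geometry /\
  (forall p L, ~ inc p L ->
     (exists q, inc q L /\ collinear p q /\
        forall q', inc q' L -> collinear p q' -> q' = q) \/
     (forall q, inc q L -> collinear p q)).

Definition nondegenerate : Prop := forall p, exists q, ~ collinear p q.

Definition disjoint (A B : pset) : Prop := forall x, A x -> B x -> False.

Definition nice (X : pset) : Prop :=
  subspace X /\ exists M1 M2, max_singular M1 /\ max_singular M2 /\
    subset M1 X /\ subset M2 X /\ disjoint M1 M2.

Definition frame_of (n : nat) (X : pset) (p p' : nat -> Point) : Prop :=
  exists M1 M2, max_singular M1 /\ max_singular M2 /\
    subset M1 X /\ subset M2 X /\ disjoint M1 M2 /\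
    basis_of M1 (map p (seq 0 n)) /\ basis_of M2 (map p' (seq 0 n)) /\
    forall i j, i < n -> j < n -> (collinear (p i) (p' j) <-> i <> j).

Definition frame_points (n : nat) (p p' : nat -> Point) : pset :=
  fun x => exists i, i < n /\ (x = p i \/ x = p' i).

Definition family := pset -> Prop.

Definition chain (D : family) : Prop :=
  (forall Y, D Y -> nice Y) /\
  (forall Y Z, D Y -> D Z -> subset Y Z \/ subset Z Y).

Definition well_ordered_chain (D : family) : Prop :=
  chain D /\
  forall E : family, (forall Y, E Y -> D Y) -> (exists Y, E Y) ->
    exists Y, E Y /\ forall Z, E Z -> subset Y Z.

Definition fmem (D : family) (Y : pset) : Prop := exists Y', D Y' /\ seteq Y Y'.
Definition fsubset (C D : family) : Prop := forall Y, C Y -> fmem D Y.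

Definition maximal_among_wo_chains (C : family) : Prop :=
  forall D, well_ordered_chain D -> fsubset C D -> fsubset D C.

Definition maximal_among_chains (C : family) : Prop :=
  forall D, chain D -> fsubset C D -> fsubset D C.

(* The chain (X_delta)_{delta <= omega}: X_k for k : nat, X_omega = whole space. *)
Definition omega_chain (X : nat -> pset) : family :=
  fun Y => (exists k, Y = X k) \/ Y = fullset.

Definition maximal_proper_subspace (X Y : pset) : Prop :=
  subspace X /\ subset X Y /\ ~ subset Y X /\
  forall Z, subspace Z -> subset X Z -> subset Z Y -> seteq Z X \/ seteq Z Y.

End PolarSpace.

(* Order theory: a member of a chain extending a well ordered chain C can be
   added to C alone, which keeps C well ordered; so maximality among well
   ordered chains and among all chains agree.  If C is maximal, every nice
   subspace comparable with all X_k belongs to C; applied to the span of a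
   frame of X_0, to a subspace between X_k and X_(k+1), and to the union of
   the X_k, this yields conditions (1)-(3).  Conversely, under (1)-(3) a
   subspace Z comparable with all X_k is a member: above X_0 it is squeezed
   between two consecutive members or is everything, and below X_0 a frame
   of Z is a frame of X_0, so Z contains the span X_0 of that frame.

   Geometry: this last step needs that every nice subspace has a frame.  A
   frame is grown greedily from two disjoint maximal singular subspaces
   M1, M2 until it is saturated, at which point its points span M1 and M2;
   its size k is at most the rank n, and a rank comparison (induction on k
   through residues, using hyperplane sections of independent sets) shows
   that no singular subspace has rank above k, whence k = n. *)

From Stdlib Require Import List Arith Lia Classical.
Import ListNotations.

Section Subspaces.
Context {Point Line : Type} {inc : Point -> Line -> Prop}.

Lemma subspace_span (A : pset Point) : subspace inc (span inc A).
Proof.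
  intros L p q Hpq HpL HqL Hp Hq r HrL T HT HAT.
  exact (HT L p q Hpq HpL HqL (Hp T HT HAT) (Hq T HT HAT) r HrL).
Qed.

Lemma span_incl (A : pset Point) : subset A (span inc A).
Proof. intros x Hx T HT HAT. exact (HAT x Hx). Qed.

Lemma span_min (A T : pset Point) :
  subspace inc T -> subset A T -> subset (span inc A) T.
Proof. intros HT HAT x Hx. exact (Hx T HT HAT). Qed.

Lemma nice_superset (X Z : pset Point) :
  nice inc X -> subspace inc Z -> subset X Z -> nice inc Z.
Proof.
  intros [_ [M1 [M2 [H1 [H2 [S1 [S2 D]]]]]]] HZ XZ.
  split; [exact HZ|]. exists M1, M2.
  refine (conj H1 (conj H2 (conj _ (conj _ D)))); intros x Hx; auto.
Qed.

Lemma frame_of_superset n (Y Y' : pset Point) p p' :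
  subset Y Y' -> frame_of inc n Y p p' -> frame_of inc n Y' p p'.
Proof.
  intros HY [M1 [M2 [A [B [C [D [E [F [G H]]]]]]]]].
  exists M1, M2.
  refine (conj A (conj B (conj _ (conj _ (conj E (conj F (conj G H)))))));
    intros x hx; auto.
Qed.

Lemma frame_points_in n (Y : pset Point) p p' :
  frame_of inc n Y p p' -> subset (frame_points n p p') Y.
Proof.
  intros [M1 [M2 [_ [_ [C [D [_ [[_ F1] [[_ G1] _]]]]]]]]] x [i [Hi [-> | ->]]].
  - apply C, (proj1 (F1 _)), span_incl. apply in_map, in_seq. lia.
  - apply D, (proj1 (G1 _)), span_incl. apply in_map, in_seq. lia.
Qed.

(* The subspace spanned by a frame contains both of its maximal singular
   subspaces, hence is nice. *)
Lemma frame_span_nice n (Y : pset Point) p p' :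
  frame_of inc n Y p p' -> nice inc (span inc (frame_points n p p')).
Proof.
  intros [M1 [M2 [A [B [_ [_ [E [[_ F1] [[_ G1] _]]]]]]]]].
  assert (Hbasis : forall q (M : pset Point),
    seteq (span inc (lset (map q (seq 0 n)))) M ->
    (forall i, i < n -> frame_points n p p' (q i)) ->
    subset M (span inc (frame_points n p p'))).
  { intros q M HM Hq x hx. apply (proj2 (HM x)) in hx. revert x hx.
    apply span_min; [apply subspace_span|]. intros y hy.
    apply in_map_iff in hy. destruct hy as [i [<- Hi]]. apply in_seq in Hi.
    apply span_incl, Hq. lia. }
  split; [apply subspace_span|]. exists M1, M2.
  refine (conj A (conj B (conj _ (conj _ E)))).
  - apply (Hbasis p); auto. intros i hi. exists i. auto.
  - apply (Hbasis p'); auto. intros i hi. exists i. auto.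
Qed.

End Subspaces.

Section Chains.
Context {Point Line : Type} {inc : Point -> Line -> Prop}.

Definition add_member (C : family Point) (Z : pset Point) : family Point :=
  fun Y => C Y \/ Y = Z.

Definition comparable_with (C : family Point) (Z : pset Point) : Prop :=
  forall Y, C Y -> subset Y Z \/ subset Z Y.

Lemma add_member_chain C Z :
  chain inc C -> nice inc Z -> comparable_with C Z -> chain inc (add_member C Z).
Proof.
  intros [Hn Hc] HZ Hcmp. split.
  - intros Y [HY| ->]; auto.
  - intros Y W [HY| ->] [HW| ->]; auto.
    + destruct (Hcmp W HW); auto.
    + left; intros x h; exact h.
Qed.

(* Adding one comparable member keeps a chain well ordered: the least
   element of a subfamily is either its least old member or Z. *)
Lemma add_member_well_ordered C Z :
  well_ordered_chain inc C -> nice inc Z -> comparable_with C Z ->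
  well_ordered_chain inc (add_member C Z).
Proof.
  intros [HC Hwo] HZ Hcmp. split; [apply add_member_chain; auto|].
  intros E HE [Y1 HY1].
  destruct (classic (exists Y, E Y /\ C Y)) as [Hex|Hno].
  - destruct (Hwo (fun Y => E Y /\ C Y)) as [Y0 [[HE0 HC0] Hmin]];
      [intros Y [_ h]; exact h|exact Hex|].
    destruct (classic (E Z)) as [HEZ|HnZ];
      [destruct (Hcmp Y0 HC0) as [h|h]|].
    + exists Y0; split; auto. intros W HW.
      destruct (HE W HW) as [h'| ->]; [apply Hmin|]; auto.
    + exists Z; split; auto. intros W HW x hx.
      destruct (HE W HW) as [h'| ->]; [apply (Hmin W (conj HW h')), h|]; auto.
    + exists Y0; split; auto. intros W HW.
      destruct (HE W HW) as [h'| ->]; [apply Hmin; auto|contradiction].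
  - assert (EZ : E Z).
    { destruct (HE Y1 HY1) as [h|<-]; auto. exfalso; eauto. }
    exists Z; split; auto. intros W HW.
    destruct (HE W HW) as [h| ->]; [exfalso; eauto|intros x hx; exact hx].
Qed.

Lemma fsubset_add_member C Z : fsubset C (add_member C Z).
Proof. intros Y HY. exists Y. split; [left; auto|intros x; tauto]. Qed.

Lemma maximal_chain_contains C Z :
  maximal_among_chains inc C -> chain inc C -> nice inc Z ->
  comparable_with C Z -> fmem C Z.
Proof.
  intros Hmax Hc HZ Hcmp.
  exact (Hmax _ (add_member_chain C Z Hc HZ Hcmp) (fsubset_add_member C Z) Z
           (or_intror eq_refl)).
Qed.

Lemma extension_comparable C D Z :
  chain inc D -> fsubset C D -> D Z -> comparable_with C Z.
Proof.
  intros [_ HD] HCD HZ Y HY. destruct (HCD Y HY) as [Y' [HY' Heq]].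
  destruct (HD Z Y' HZ HY') as [h|h].
  - right. intros x hx. apply Heq, h, hx.
  - left. intros x hx. apply h, Heq, hx.
Qed.

(* For a well ordered chain, maximality among well ordered chains and among
   all chains agree: a member of a larger chain can be added on its own. *)
Lemma maximal_wo_iff_maximal C :
  well_ordered_chain inc C ->
  maximal_among_wo_chains inc C <-> maximal_among_chains inc C.
Proof.
  intros HC. split.
  - intros Hmax D HD HCD Z HZ.
    exact (Hmax _ (add_member_well_ordered C Z HC (proj1 HD Z HZ)
                     (extension_comparable C D Z HD HCD HZ))
              (fsubset_add_member C Z) Z (or_intror eq_refl)).
  - intros Hmax D HD. apply Hmax, HD.
Qed.

End Chains.

Lemma least_nat (P : nat -> Prop) m :
  P m -> exists k, P k /\ forall j, j < k -> ~ P j.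
Proof.
  induction m as [m IH] using lt_wf_ind. intros Pm.
  destruct (classic (exists j, j < m /\ P j)) as [[j [Hj Pj]]|Hno].
  - exact (IH j Hj Pj).
  - exists m. split; auto. intros j Hj Pj. apply Hno; eauto.
Qed.

Section OmegaChain.
Context {Point Line : Type} {inc : Point -> Line -> Prop} (X : nat -> pset Point).
Hypothesis X_nice : forall k, nice inc (X k).
Hypothesis X_strict : forall k m, k < m -> subset (X k) (X m) /\ ~ subset (X m) (X k).
Hypothesis X_proper : forall k, ~ subset (@fullset Point) (X k).

Lemma X_mono j k : j <= k -> subset (X j) (X k).
Proof.
  intros h. destruct (Nat.eq_dec j k) as [->|ne]; [intros x hx; exact hx|].
  apply X_strict. lia.
Qed.

Lemma fmem_X k Z : seteq Z (X k) -> fmem (omega_chain X) Z.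
Proof. intros E. exists (X k). split; [left; exists k|]; auto. Qed.

Lemma fmem_between j Z : subset (X j) Z -> subset Z (X (S j)) ->
  fmem (omega_chain X) Z -> seteq Z (X j) \/ seteq Z (X (S j)).
Proof.
  intros hjZ hZj [Y [[[k ->]| ->] E]].
  - destruct (le_lt_dec k j) as [h|h].
    + left. intros x; split; [intros hx; apply (X_mono k j h), E, hx|apply hjZ].
    + right. intros x; split; [apply hZj|intros hx; apply E, (X_mono (S j) k); auto].
  - exfalso. apply (X_proper (S j)). intros x _. apply hZj, E. exact I.
Qed.

Section Maximal.
Hypothesis C_chain : chain inc (omega_chain X).
Hypothesis C_maximal : maximal_among_chains inc (omega_chain X).

(* (b) => (c1): a frame of X_0 spans a nice subspace below X_0, which must
   be a member of the chain, hence X_0 itself. *)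
Lemma maximal_base_spanned n p p' : frame_of inc n (X 0) p p' ->
  seteq (span inc (frame_points n p p')) (X 0).
Proof.
  intros Hf. set (F := span inc (frame_points n p p')).
  assert (FX : subset F (X 0))
    by (apply span_min; [apply (X_nice 0)|exact (frame_points_in n (X 0) p p' Hf)]).
  assert (cmp : comparable_with (omega_chain X) F).
  { intros Y [[k ->]| ->]; right; intros x hx; [apply (X_mono 0 k); [lia|auto]|exact I]. }
  destruct (maximal_chain_contains _ F C_maximal C_chain
              (frame_span_nice n (X 0) p p' Hf) cmp) as [Y [[[[|k] ->]| ->] E]].
  - exact E.
  - exfalso. apply (proj2 (X_strict 0 (S k) ltac:(lia))). intros x hx. apply FX, E, hx.
  - exfalso. apply (X_proper 0). intros x hx. apply FX, E, hx.
Qed.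

(* (b) => (c2): a subspace between X_k and X_{k+1} is nice and comparable
   with every member, hence one of the two. *)
Lemma maximal_covering k : maximal_proper_subspace inc (X k) (X (S k)).
Proof.
  split; [apply (X_nice k)|]. split; [apply X_strict; lia|].
  split; [apply X_strict; lia|].
  intros Z HZ HkZ HZk. apply fmem_between; auto.
  apply (maximal_chain_contains _ Z C_maximal C_chain
           (nice_superset (X k) Z (X_nice k) HZ HkZ)).
  intros Y [[j ->]| ->]; [destruct (le_lt_dec j k) as [h|h]|].
  - left. intros x hx. apply HkZ, (X_mono j k h), hx.
  - right. intros x hx. apply (X_mono (S k) j); [lia|]. apply HZk, hx.
  - right. intros x hx; exact I.
Qed.

(* (b) => (c3): the union of the X_k is a nice subspace strictly above every
   X_k, so it must be the whole space. *)
Lemma maximal_exhaustive x : exists k, X k x.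
Proof.
  set (U := fun y => exists k, X k y).
  assert (HU : subspace inc U).
  { intros L a b Hab HaL HbL [i Hi] [j Hj] r HrL. exists (max i j).
    apply (proj1 (X_nice (max i j)) L a b Hab HaL HbL); auto;
      [apply (X_mono i)|apply (X_mono j)]; auto; lia. }
  assert (Un : nice inc U).
  { apply (nice_superset (X 0)); auto. intros y hy; exists 0; exact hy. }
  assert (cmp : comparable_with (omega_chain X) U).
  { intros Y [[j ->]| ->]; [left; intros y hy; exists j; exact hy|].
    right. intros y _; exact I. }
  destruct (maximal_chain_contains _ U C_maximal C_chain Un cmp)
    as [Y [[[j ->]| ->] E]].
  - exfalso. apply (proj2 (X_strict j (S j) ltac:(lia))).
    intros y hy. apply E. exists (S j). exact hy.
  - apply E. exact I.
Qed.

End Maximal.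

Section Conditions.
Hypothesis X_covering : forall k, maximal_proper_subspace inc (X k) (X (S k)).
Hypothesis X_exhaustive : forall x, exists k, X k x.

(* A subspace above X_0 comparable with every member is a member: it lies
   between X_j and X_{j+1} for the first X_{j+1} it misses, or it is the
   whole space. *)
Lemma member_above_base Z : subspace inc Z -> subset (X 0) Z ->
  comparable_with (omega_chain X) Z -> fmem (omega_chain X) Z.
Proof.
  intros HZ h0 cmp.
  destruct (classic (exists k, ~ subset (X k) Z)) as [[k0 hk0]|hall].
  - destruct (least_nat (fun k => ~ subset (X k) Z) k0 hk0) as [[|j] [hk hmin]];
      [contradiction|].
    assert (hj : subset (X j) Z) by (apply NNPP; exact (hmin j ltac:(lia))).
    assert (hZj : subset Z (X (S j)))
      by (destruct (cmp (X (S j)) (or_introl (ex_intro _ (S j) eq_refl)));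
          [contradiction|auto]).
    destruct (proj2 (proj2 (proj2 (X_covering j))) Z HZ hj hZj) as [E|E];
      apply (fmem_X _ Z E).
  - exists (@fullset Point). split; [right; reflexivity|].
    intros x; split; intros _; [exact I|].
    destruct (X_exhaustive x) as [k hk]. apply NNPP. intro hn. apply hall.
    exists k. intro hs. apply hn, hs, hk.
Qed.

(* A nice subspace Z below X_0 equals X_0, because a frame of Z is also a
   frame of X_0, and frames of X_0 span X_0. *)
Lemma member_below_base n Z :
  (forall p p', frame_of inc n (X 0) p p' -> seteq (span inc (frame_points n p p')) (X 0)) ->
  (exists p p', frame_of inc n Z p p') ->
  subspace inc Z -> subset Z (X 0) -> fmem (omega_chain X) Z.
Proof.
  intros Hspan [p [p' Hf]] HZ h0. apply (fmem_X 0). intros x; split; [apply h0|].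
  intros hx. apply (Hspan p p' (frame_of_superset n Z (X 0) p p' h0 Hf)) in hx.
  revert x hx. apply span_min; [exact HZ|exact (frame_points_in n Z p p' Hf)].
Qed.

End Conditions.
End OmegaChain.

Lemma remove_member {A : Type} (c : A) (s : list A) : NoDup s -> In c s ->
  exists r, NoDup r /\ ~ In c r /\ (forall y, In y r -> In y s) /\
    length s = S (length r).
Proof.
  intros Hnd Hcs. destruct (in_split c s Hcs) as [s1 [s2 ->]].
  exists (s1 ++ s2). split; [exact (NoDup_remove_1 _ _ _ Hnd)|].
  split; [exact (NoDup_remove_2 _ _ _ Hnd)|]. split.
  - intros y hy. apply in_app_or in hy. apply in_or_app. simpl. tauto.
  - rewrite !length_app. simpl. lia.
Qed.

Lemma relational_image {A B : Type} (rel : A -> B -> Prop) (r : list A) :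
  NoDup r -> (forall y, In y r -> exists z, rel y z) ->
  (forall y y' z, In y r -> In y' r -> rel y z -> rel y' z -> y = y') ->
  exists t, NoDup t /\ length t = length r /\
    forall z, In z t -> exists y, In y r /\ rel y z.
Proof.
  induction r as [|y r IH]; intros Hnd Htot Hinj.
  - exists []. repeat split; [constructor|intros z []].
  - inversion Hnd as [|? ? Hy Hnd']; subst.
    destruct IH as [t [Ht [Hlen Hpre]]]; auto.
    { intros w hw. apply Htot. right. exact hw. }
    { intros a b z ha hb. apply Hinj; right; auto. }
    destruct (Htot y (or_introl eq_refl)) as [z Hz].
    exists (z :: t). split; [|split; [simpl; auto|]].
    + constructor; auto. intros Hzt. destruct (Hpre z Hzt) as [y' [Hy' Hrel]].
      apply Hy. rewrite <- (Hinj y' y z); auto; [right|left]; auto.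
    + intros w [<-|hw]; [exists y; split; [left|]; auto|].
      destruct (Hpre w hw) as [y' [h1 h2]]. exists y'. split; [right|]; auto.
Qed.

Section PolarGeometry.
Context {Point Line : Type} {inc : Point -> Line -> Prop}.
Hypothesis Hgeom : polar_space inc.

Notation col := (collinear inc).
Notation sp := (span inc).

Lemma collinear_refl x : col x x.
Proof. left; auto. Qed.

Lemma collinear_sym x y : col x y -> col y x.
Proof. intros [->|[L [h1 h2]]]; [left; auto|right; exists L; auto]. Qed.

(* By the one-or-all axiom, the points collinear with x form a subspace. *)
Lemma perp_subspace x : subspace inc (fun y => col x y).
Proof.
  intros L a b Hab HaL HbL Ha Hb r HrL.
  destruct (classic (inc x L)) as [HxL|HxL]; [right; exists L; auto|].
  destruct (proj2 Hgeom x L HxL) as [[q [HqL [_ Hu]]]|Hall]; [|apply Hall, HrL].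
  exfalso. apply Hab. rewrite (Hu a HaL Ha), (Hu b HbL Hb). auto.
Qed.

Lemma perp_subspace_r x : subspace inc (fun y => col y x).
Proof.
  intros L a b ne ha hb Ha Hb r hr. apply collinear_sym.
  exact (perp_subspace x L a b ne ha hb (collinear_sym _ _ Ha)
           (collinear_sym _ _ Hb) r hr).
Qed.

Lemma subspace_inter (A B : pset Point) :
  subspace inc A -> subspace inc B -> subspace inc (fun x => A x /\ B x).
Proof.
  intros HA HB L a b Hab HaL HbL [Ha1 Ha2] [Hb1 Hb2] r HrL.
  split; [exact (HA L a b Hab HaL HbL Ha1 Hb1 r HrL)|exact (HB L a b Hab HaL HbL Ha2 Hb2 r HrL)].
Qed.

Lemma line_subspace L : subspace inc (fun x => inc x L).
Proof.
  intros M a b Hab HaM HbM HaL HbL r HrM.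
  rewrite (proj2 (proj1 Hgeom) a b L M Hab HaL HbL HaM HbM). exact HrM.
Qed.

Lemma common_line a b : a <> b -> col a b -> exists L, inc a L /\ inc b L.
Proof. intros ne [e|h]; [contradiction|exact h]. Qed.

Lemma projection_point L a w : inc a L -> ~ col w a ->
  exists c, inc c L /\ col w c /\ forall c', inc c' L -> col w c' -> c' = c.
Proof.
  intros HaL Hwa.
  assert (HwL : ~ inc w L) by (intro h; apply Hwa; right; exists L; auto).
  destruct (proj2 Hgeom w L HwL) as [h|h]; [exact h|].
  exfalso. apply Hwa, h, HaL.
Qed.

Definition clique (A : pset Point) : Prop := forall a b, A a -> A b -> col a b.

Lemma span_clique (A : pset Point) : clique A -> clique (sp A).
Proof.
  intros HA.
  assert (H1 : forall a x, A a -> sp A x -> col a x).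
  { intros a x Ha Hx. revert x Hx. apply span_min; [apply perp_subspace|].
    intros y hy. apply HA; auto. }
  intros x y Hx Hy. revert y Hy. apply span_min; [apply perp_subspace|].
  intros a Ha. apply collinear_sym, H1; auto.
Qed.

Definition pair (a b : Point) : pset Point := fun w => w = a \/ w = b.

Lemma span_pair_sub (T : pset Point) a b :
  subspace inc T -> T a -> T b -> subset (sp (pair a b)) T.
Proof. intros HT Ha Hb. apply span_min; auto. intros w [->| ->]; auto. Qed.

Definition max_singular_in (R M : pset Point) : Prop :=
  subspace inc M /\ clique M /\ subset M R /\
  forall x, R x -> (forall y, M y -> col x y) -> M x.

Lemma max_singular_in_full M :
  max_singular inc M -> max_singular_in (@fullset Point) M.
Proof.
  intros [[HS HC] Hm]. split; [exact HS|]. split; [exact HC|].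
  split; [intros x _; exact I|]. intros x _ Hx.
  set (T := sp (fun y => M y \/ y = x)).
  assert (Tc : singular inc T).
  { split; [apply subspace_span|]. apply span_clique.
    intros a b [Ha| ->] [Hb| ->];
      [apply HC|apply collinear_sym, Hx|apply Hx|apply collinear_refl]; auto. }
  apply (Hm T Tc); [intros y hy|]; apply span_incl; auto.
Qed.

Lemma max_singular_in_ext (R R' M : pset Point) :
  seteq R R' -> max_singular_in R M -> max_singular_in R' M.
Proof.
  intros E [a [b [c d]]]. repeat split; auto.
  - intros x h. apply E, c, h.
  - intros x h. apply d, E, h.
Qed.

Lemma exists_noncollinear {R M} q :
  max_singular_in R M -> R q -> ~ M q -> exists e, M e /\ ~ col e q.
Proof.
  intros [_ [_ [_ Hm]]] Hq HMq. apply NNPP. intros hn. apply HMq, Hm; auto.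
  intros y Hy. apply NNPP. intros hqy. apply hn. exists y. split; auto.
  intro h; apply hqy, collinear_sym, h.
Qed.

Lemma residue_max_singular R M e f : max_singular_in R M -> M e -> ~ col e f ->
  max_singular_in (fun x => R x /\ col x e /\ col x f) (fun x => M x /\ col x f).
Proof.
  intros [HS [HC [HR Hm]]] He Hef.
  split; [apply subspace_inter; [exact HS|apply perp_subspace_r]|].
  split; [intros a b [ha _] [hb _]; apply HC; auto|].
  split; [intros x [hx hxf]; repeat split; auto|].
  intros x [hR [hxe hxf]] Hall. split; [|exact hxf].
  apply Hm; [exact hR|]. intros y Hy.
  destruct (classic (col y f)) as [hyf|hyf]; [apply Hall; split; auto|].
  destruct (classic (y = e)) as [->|ne]; [exact hxe|].
  destruct (common_line y e ne (HC _ _ Hy He)) as [L [HyL HeL]].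
  assert (hfy : ~ col f y) by (intro h; apply hyf, collinear_sym, h).
  destruct (projection_point L y f HyL hfy) as [c [HcL [Hfc _]]].
  assert (Mc : M c) by exact (HS L y e ne HyL HeL Hy He c HcL).
  assert (xc : col x c) by (apply Hall; split; auto; apply collinear_sym, Hfc).
  assert (cne : c <> e) by (intros ->; apply Hef, collinear_sym, Hfc).
  exact (perp_subspace x L c e cne HcL HeL xc hxe y HyL).
Qed.


Definition partial_frame (M1 M2 : pset Point) (k : nat) (p p' : nat -> Point) : Prop :=
  (forall i, i < k -> M1 (p i) /\ M2 (p' i)) /\
  (forall i j, i < k -> j < k -> (col (p i) (p' j) <-> i <> j)).

Definition saturated (M1 : pset Point) (k : nat) (p' : nat -> Point) : Prop :=
  forall x, M1 x -> (forall i, i < k -> col x (p' i)) -> False.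

Definition first_points (k : nat) (p : nat -> Point) : list Point := map p (seq 0 k).

Lemma first_points_in k p i : i < k -> lset (first_points k p) (p i).
Proof. intros h. apply in_map, in_seq. lia. Qed.

Lemma first_points_inv k p x : lset (first_points k p) x -> exists i, i < k /\ x = p i.
Proof.
  intros h. apply in_map_iff in h. destruct h as [i [<- h]].
  apply in_seq in h. exists i; split; [lia|auto].
Qed.

Lemma first_points_length k p : length (first_points k p) = k.
Proof. unfold first_points. rewrite length_map, length_seq. reflexivity. Qed.

Lemma partial_frame_sym {M1 M2 k p p'} :
  partial_frame M1 M2 k p p' -> partial_frame M2 M1 k p' p.
Proof.
  intros [H1 H2]. split; [intros i hi; destruct (H1 i hi); auto|].
  intros i j hi hj. split.
  - intros h e. subst. apply (H2 j j hj hj); auto. apply collinear_sym; auto.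
  - intros ne. apply collinear_sym, (H2 j i hj hi). auto.
Qed.

Lemma partial_frame_weaken {M1 M2 N1 N2 k p p'} : subset M1 N1 -> subset M2 N2 ->
  partial_frame M1 M2 k p p' -> partial_frame N1 N2 k p p'.
Proof.
  intros h1 h2 [Hin Hp]. split; auto. intros i hi. destruct (Hin i hi); auto.
Qed.

(* The points of a partial frame are independent: p_i is separated from the
   other p_j by the subspace (p'_i)^perp. *)
Lemma partial_frame_independent {M1 M2 k p p'} :
  partial_frame M1 M2 k p p' -> independent inc (first_points k p).
Proof.
  intros [Hin Hpat]. split.
  - apply NoDup_map_NoDup_ForallPairs; [|apply seq_NoDup].
    intros i j hi hj e. apply in_seq in hi. apply in_seq in hj.
    destruct (Nat.eq_dec i j) as [|ne]; auto. exfalso.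
    apply (proj1 (Hpat i i ltac:(lia) ltac:(lia))); auto.
    rewrite e. apply (proj2 (Hpat j i ltac:(lia) ltac:(lia))). auto.
  - intros x hx Hsp. destruct (first_points_inv k p x hx) as [i [hi ->]].
    assert (H : col (p' i) (p i)).
    { revert Hsp. apply span_min; [apply perp_subspace|].
      intros y [hy ne]. destruct (first_points_inv k p y hy) as [j [hj ->]].
      apply collinear_sym, (proj2 (Hpat j i hj hi)). intros ->. auto. }
    apply (proj1 (Hpat i i hi hi)); auto. apply collinear_sym, H.
Qed.

Definition extend_at (p : nat -> Point) (k : nat) (a : Point) : nat -> Point :=
  fun i => if Nat.eq_dec i k then a else p i.

Lemma partial_frame_extend {M1 M2 k p p'} a b : partial_frame M1 M2 k p p' ->
  M1 a -> M2 b -> (forall i, i < k -> col a (p' i)) ->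
  (forall i, i < k -> col (p i) b) -> ~ col a b ->
  partial_frame M1 M2 (S k) (extend_at p k a) (extend_at p' k b).
Proof.
  intros [Hin Hpat] Ha Hb Hap Hpb Hab. unfold extend_at. split.
  - intros i hi. destruct (Nat.eq_dec i k) as [->|ne]; auto. apply Hin; lia.
  - intros i j hi hj.
    destruct (Nat.eq_dec i k) as [->|ni]; destruct (Nat.eq_dec j k) as [->|nj].
    + split; intros h; contradiction.
    + split; [lia|intros _; apply Hap; lia].
    + split; [lia|intros _; apply Hpb; lia].
    + apply Hpat; lia.
Qed.

(* A point y of M not
   collinear with p'_m is moved along the line y p_m to the point of that
   line collinear with p'_m, which meets one more of the conditions. *)
Lemma projection_principle {M M' k p p'} (Q : pset Point) :
  subspace inc M -> clique M -> partial_frame M M' k p p' -> subspace inc Q ->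
  (forall i, i < k -> Q (p i)) ->
  (forall y, M y -> (forall i, i < k -> col y (p' i)) -> Q y) -> subset M Q.
Proof.
  intros HS HC [Hin Hpat] HQ Qp HA.
  assert (claim : forall m y, M y -> (forall i, i < k -> m <= i -> col y (p' i)) -> Q y).
  { induction m as [|m IH]; intros y Hy Hc.
    - apply HA; auto. intros i hi. apply Hc; auto; lia.
    - destruct (le_lt_dec k m) as [hkm|hmk].
      { apply IH; auto. intros i hi hmi. apply Hc; auto; lia. }
      destruct (classic (col y (p' m))) as [hy|hy].
      { apply IH; auto. intros i hi hmi.
        destruct (Nat.eq_dec i m) as [->|ne]; auto. apply Hc; auto; lia. }
      destruct (classic (y = p m)) as [->|ne]; [apply Qp; auto|].
      assert (Hpm := proj1 (Hin m hmk)).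
      destruct (common_line y (p m) ne (HC _ _ Hy Hpm)) as [L [HyL HpL]].
      assert (hy' : ~ col (p' m) y) by (intro h; apply hy, collinear_sym, h).
      destruct (projection_point L y (p' m) HyL hy') as [c [HcL [Hcc _]]].
      assert (Mc : M c) by exact (HS L y (p m) ne HyL HpL Hy Hpm c HcL).
      assert (Qc : Q c).
      { apply IH; auto. intros i hi hmi. apply collinear_sym.
        destruct (Nat.eq_dec i m) as [->|ni]; [exact Hcc|].
        apply (perp_subspace (p' i) L y (p m) ne HyL HpL); auto.
        - apply collinear_sym, Hc; auto; lia.
        - apply collinear_sym, (proj2 (Hpat m i hmk hi)). auto. }
      assert (cne : c <> p m).
      { intros ->. apply (proj1 (Hpat m m hmk hmk)); auto. apply collinear_sym, Hcc. }
      exact (HQ L c (p m) cne HcL HpL Qc (Qp m hmk) y HyL). }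
  intros y Hy. apply (claim k y Hy). intros; lia.
Qed.

Lemma saturated_spans {M1 M2 k p p'} : subspace inc M1 -> clique M1 ->
  partial_frame M1 M2 k p p' -> saturated M1 k p' ->
  subset M1 (sp (lset (first_points k p))).
Proof.
  intros HS HC Hfr HA. apply (projection_principle _ HS HC Hfr (subspace_span _)).
  - intros i hi. apply span_incl, first_points_in, hi.
  - intros y Hy Hc. exfalso. exact (HA y Hy Hc).
Qed.

(* If a in M1 is collinear with p'_0 .. p'_(k-1), some b in M2 collinear
   with p_0 .. p_(k-1) is not collinear with a; otherwise a would be
   collinear with all of M2 by the projection principle, so a in M2. *)
Lemma frame_partner {R M1 M2 k p p'} a : max_singular_in R M2 -> subset M1 R ->
  disjoint M1 M2 -> partial_frame M1 M2 k p p' -> M1 a ->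
  (forall i, i < k -> col a (p' i)) ->
  exists b, M2 b /\ (forall i, i < k -> col (p i) b) /\ ~ col a b.
Proof.
  intros [HS [HC [HR Hm]]] H1R Hd Hfr Ha Hap. apply NNPP. intros Hno.
  assert (Hall : subset M2 (fun y => col a y)).
  { apply (projection_principle _ HS HC (partial_frame_sym Hfr) (perp_subspace a));
      auto.
    intros y Hy Hyp. apply NNPP. intros hn. apply Hno. exists y. repeat split; auto.
    intros i hi. apply collinear_sym, Hyp, hi. }
  apply (Hd a Ha), Hm; [apply H1R, Ha|exact Hall].
Qed.

(* If partial frames have bounded size, greedy extension reaches a
   saturated one (d is any point, used for the empty frame). *)
Lemma saturated_frame_exists {R M1 M2} (d : Point) N :
  max_singular_in R M2 -> subset M1 R -> disjoint M1 M2 ->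
  (forall k p p', partial_frame M1 M2 k p p' -> k <= N) ->
  exists k p p', partial_frame M1 M2 k p p' /\ saturated M1 k p'.
Proof.
  intros HM2 H1R Hd Hb. apply NNPP. intros Hno.
  assert (H : forall m, exists p p', partial_frame M1 M2 m p p').
  { induction m as [|m [p [p' IH]]].
    - exists (fun _ => d), (fun _ => d). split; intros; lia.
    - assert (hA : ~ saturated M1 m p') by (intro h; apply Hno; eauto).
      apply not_all_ex_not in hA. destruct hA as [a ha].
      apply imply_to_and in ha. destruct ha as [Ma ha].
      apply imply_to_and in ha. destruct ha as [hap _].
      destruct (frame_partner a HM2 H1R Hd IH Ma hap) as [b [Mb [hpb hab]]].
      exists (extend_at p m a), (extend_at p' m b). apply partial_frame_extend; auto. }
  destruct (H (S N)) as [p [p' hf]]. apply Hb in hf. lia.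
Qed.

(* Saturation on one side forces saturation on the other: a point of M2
   collinear with all p_i would be collinear with all of M1 = <p_i>. *)
Lemma saturated_sym {R M1 M2 k p p'} :
  max_singular_in R M1 -> max_singular_in R M2 -> disjoint M1 M2 ->
  partial_frame M1 M2 k p p' -> saturated M1 k p' -> saturated M2 k p.
Proof.
  intros [HS1 [HC1 [HR1 Hm1]]] [HS2 [HC2 [HR2 Hm2]]] Hd Hfr HA b Hb Hbp.
  assert (sub := saturated_spans HS1 HC1 Hfr HA).
  apply (Hd b); [|exact Hb]. apply Hm1; [apply HR2, Hb|].
  intros y Hy. apply sub in Hy. revert y Hy. apply span_min; [apply perp_subspace|].
  intros y hy. destruct (first_points_inv k p y hy) as [i [hi ->]]. apply Hbp, hi.
Qed.


Definition span_without (s : list Point) (y : Point) : pset Point :=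
  sp (fun w => In w s /\ w <> y).

Lemma pair_span_without s y c a : In c s -> In a s -> c <> y -> a <> y ->
  subset (sp (pair c a)) (span_without s y).
Proof.
  intros hc ha hcy hay. apply span_pair_sub; [apply subspace_span| |]; apply span_incl; auto.
Qed.

Lemma independent_exchange s y c x : independent inc s -> In y s -> In c s -> c <> y ->
  span_without s y x -> ~ sp (pair c x) y.
Proof.
  intros [_ Hind] hy hc hcy hx hyx. apply (Hind y hy).
  exact (span_pair_sub _ c x (subspace_span _) (span_incl _ c (conj hc hcy)) hx y hyx).
Qed.

(* z is the point of the line c y collinear with f (or y itself when y is
   collinear with f); c and z span the same line as c and y. *)
Definition section_rel (c f y z : Point) : Prop :=
  col z f /\ z <> c /\ sp (pair c z) y /\ sp (pair c y) z.

Lemma section_point c f y : ~ col c f -> y <> c -> col c y ->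
  exists z, section_rel c f y z.
Proof.
  intros Hcf ync Hcy.
  destruct (classic (col y f)) as [hyf|hyf].
  { exists y. repeat split; auto; apply span_incl; right; auto. }
  destruct (common_line c y (not_eq_sym ync) Hcy) as [L [HcL HyL]].
  assert (hfc : ~ col f c) by (intro h; apply Hcf, collinear_sym, h).
  destruct (projection_point L c f HcL hfc) as [z [HzL [Hfz _]]].
  assert (znc : z <> c) by (intros ->; contradiction).
  assert (Hc : forall a, sp (pair c a) c) by (intros a; apply span_incl; left; auto).
  assert (Ha : forall a, sp (pair c a) a) by (intros a; apply span_incl; right; auto).
  exists z. repeat split; [apply collinear_sym, Hfz|exact znc| |].
  - exact (subspace_span _ L c z (not_eq_sym znc) HcL HzL (Hc z) (Ha z) y HyL).
  - exact (subspace_span _ L c y (not_eq_sym ync) HcL HyL (Hc y) (Ha y) z HzL).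
Qed.

Lemma section_point_unique c f y z1 z2 : ~ col c f -> y <> c -> col c y ->
  section_rel c f y z1 -> section_rel c f y z2 -> z1 = z2.
Proof.
  intros Hcf ync Hcy [h1 [_ [_ h1']]] [h2 [_ [_ h2']]].
  destruct (common_line c y (not_eq_sym ync) Hcy) as [L [HcL HyL]].
  assert (onL : subset (sp (pair c y)) (fun x => inc x L))
    by (apply span_pair_sub; auto; apply line_subspace).
  assert (hfc : ~ col f c) by (intro h; apply Hcf, collinear_sym, h).
  destruct (projection_point L c f HcL hfc) as [z [_ [_ Hu]]].
  rewrite (Hu z1 (onL _ h1') (collinear_sym _ _ h1)), (Hu z2 (onL _ h2') (collinear_sym _ _ h2)).
  reflexivity.
Qed.

(* If some
   c in s is not collinear with f, replace every other y in s by the point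
   of the line c y collinear with f; independence follows by exchange. *)
Lemma hyperplane_section s f : independent inc s -> clique (lset s) ->
  exists t, independent inc t /\ subset (lset t) (sp (lset s)) /\
    (forall x, In x t -> col x f) /\ length s <= S (length t).
Proof.
  intros Hs Hcl.
  destruct (classic (exists c, In c s /\ ~ col c f)) as [[c [Hcs Hcf]]|Hno].
  2:{ exists s. split; [exact Hs|]. split; [apply span_incl|]. split; [|lia].
      intros x hx. apply NNPP. intro h. apply Hno. eauto. }
  destruct (remove_member c s (proj1 Hs) Hcs) as [r [Hndr [Hcr [Hrs Hlen]]]].
  assert (Hyc : forall y, In y r -> y <> c) by (intros y hy ->; contradiction).
  set (rel := section_rel c f).
  assert (Hrel_inj : forall y y' z, In y r -> In y' r -> rel y z -> rel y' z -> y = y').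
  { intros y y' z hy hy' [_ [_ [_ hz]]] [_ [_ [hy'z _]]].
    apply NNPP. intros ne.
    apply (independent_exchange s y' c z Hs (Hrs y' hy') Hcs (not_eq_sym (Hyc y' hy'))); auto.
    apply (pair_span_without s y' c y Hcs (Hrs y hy) (not_eq_sym (Hyc y' hy')) ne), hz. }
  assert (Hrel_tot : forall y, In y r -> exists z, rel y z)
    by (intros y hy; exact (section_point c f y Hcf (Hyc y hy) (Hcl c y Hcs (Hrs y hy)))).
  destruct (relational_image rel r Hndr Hrel_tot Hrel_inj) as [t [Htnd [Htlen Htrel]]].
  exists t. split; [split; [exact Htnd|]|split; [|split]].
  - intros x hx Hsp. destruct (Htrel x hx) as [y [hy hxy]].
    apply (independent_exchange s y c x Hs (Hrs y hy) Hcs (not_eq_sym (Hyc y hy)));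
      [|exact (proj1 (proj2 (proj2 hxy)))].
    enough (Hsub : subset (sp (fun w => In w t /\ w <> x)) (span_without s y))
      by exact (Hsub x Hsp).
    apply span_min; [apply subspace_span|]. intros z [hz nz].
    destruct (Htrel z hz) as [y' [hy' hyz]].
    assert (ne : y' <> y).
    { intros ->. apply nz.
      exact (section_point_unique c f y z x Hcf (Hyc y hy) (Hcl c y Hcs (Hrs y hy)) hyz hxy). }
    apply (pair_span_without s y c y' Hcs (Hrs y' hy') (not_eq_sym (Hyc y hy)) ne).
    exact (proj2 (proj2 (proj2 hyz))).
  - intros z hz. destruct (Htrel z hz) as [y [hy hyz]].
    exact (span_pair_sub _ c y (subspace_span _) (span_incl _ c Hcs)
             (span_incl _ y (Hrs y hy)) z (proj2 (proj2 (proj2 hyz)))).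
  - intros x hx. destruct (Htrel x hx) as [y [_ hyz]]. exact (proj1 hyz).
  - lia.
Qed.


Lemma perp_section s (f : nat -> Point) k : independent inc s -> clique (lset s) ->
  exists t, independent inc t /\ subset (lset t) (sp (lset s)) /\
    (forall x i, In x t -> i < k -> col x (f i)) /\ length s <= length t + k.
Proof.
  intros Hi Hc. induction k as [|k IH].
  - exists s. split; [exact Hi|]. split; [apply span_incl|]. split; intros; lia.
  - destruct IH as [t [ht [hts [htf hl]]]].
    assert (tc : clique (lset t)).
    { intros a b ha hb. apply (span_clique _ Hc); apply hts; auto. }
    destruct (hyperplane_section t (f k) ht tc) as [u [hu [hut [huf hl']]]].
    exists u. split; [exact hu|]. split; [|split; [|lia]].
    + intros x hx. apply (span_min _ _ (subspace_span _) hts), hut, hx.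
    + intros x i hx hi. destruct (Nat.eq_dec i k) as [->|ne]; [apply huf, hx|].
      assert (H : subset (sp (lset t)) (fun y => col (f i) y)).
      { apply span_min; [apply perp_subspace|].
        intros y hy. apply collinear_sym, htf; auto; lia. }
      apply collinear_sym, H, hut, hx.
Qed.

(* Independent sets inside M1 have at most k points when the partial frame
   of size k is saturated: otherwise a point of M1 survives the k sections
   by (p'_i)^perp. *)
Lemma saturated_frame_bound {M1 M2 k p p'} u : subspace inc M1 -> clique M1 ->
  partial_frame M1 M2 k p p' -> saturated M1 k p' -> independent inc u ->
  subset (lset u) M1 -> length u <= k.
Proof.
  intros HS HC Hfr HA Hu HuM.
  assert (uc : clique (lset u)) by (intros a b ha hb; apply HC; apply HuM; auto).
  destruct (perp_section u p' k Hu uc) as [[|x t] [_ [hts [htf hl]]]];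
    [simpl in hl; lia|exfalso].
  apply (HA x); [apply (span_min _ _ HS HuM), hts; left; auto|].
  intros i hi. apply htf; [left|]; auto.
Qed.

(* An independent clique s of R either has at most k points or its span
   meets M2: a point surviving the sections by (p'_i)^perp is collinear
   with M2 = <p'_i>, hence lies in M2. *)
Lemma clique_meets_side {R M1 M2 k p p'} s : subspace inc R ->
  max_singular_in R M2 -> partial_frame M1 M2 k p p' -> saturated M2 k p ->
  independent inc s -> clique (lset s) -> subset (lset s) R ->
  length s <= k \/ exists q, sp (lset s) q /\ M2 q.
Proof.
  intros HR [HS2 [HC2 [HR2 Hm2]]] Hfr HB Hs Hsc HsR.
  assert (M2sp := saturated_spans HS2 HC2 (partial_frame_sym Hfr) HB).
  destruct (perp_section s p' k Hs Hsc) as [[|x t] [_ [hts [htf hl]]]];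
    [left; simpl in hl; lia|right].
  assert (hx : sp (lset s) x) by (apply hts; left; auto).
  exists x. split; [exact hx|]. apply Hm2; [apply (span_min _ _ HR HsR), hx|].
  intros y Hy. apply M2sp in Hy. revert y Hy. apply span_min; [apply perp_subspace|].
  intros y hy. destruct (first_points_inv k p' y hy) as [i [hi ->]].
  apply htf; [left; auto|exact hi].
Qed.

(* Partial frames of the residue at (e, q) extend by the pair (e, q), so
   they are smaller than a saturated frame of size k of (M1, M2). *)
Lemma residue_frame_bound {R M1 M2 k p p'} e q : max_singular_in R M1 ->
  partial_frame M1 M2 k p p' -> saturated M1 k p' -> M1 e -> M2 q -> ~ col e q ->
  forall k2 p2 p2',
    partial_frame (fun x => M1 x /\ col x q) (fun x => M2 x /\ col x e) k2 p2 p2' ->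
    S k2 <= k.
Proof.
  intros [HS1 [HC1 _]] Hfr HA He Hq Heq k2 p2 p2' hf.
  assert (hf2 : partial_frame M1 M2 k2 p2 p2')
    by (revert hf; apply partial_frame_weaken; intros x [hx _]; exact hx).
  assert (hf3 : partial_frame M1 M2 (S k2) (extend_at p2 k2 e) (extend_at p2' k2 q)).
  { apply partial_frame_extend; auto; intros i hi;
      [apply collinear_sym|]; apply (proj1 hf i hi). }
  rewrite <- (first_points_length (S k2) (extend_at p2 k2 e)).
  apply (saturated_frame_bound _ HS1 HC1 Hfr HA (partial_frame_independent hf3)).
  intros x hx. destruct (first_points_inv _ _ x hx) as [i [hi ->]]. apply (proj1 hf3 i hi).
Qed.

(* Induction on k: the clique meets M2 in
   some q, pick e in M1 not collinear with q and pass to the residue at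
   (e, q), where the clique loses at most one point and frames shrink. *)
Lemma clique_rank_le_frame : forall k R M1 M2 p p' s, subspace inc R ->
  max_singular_in R M1 -> max_singular_in R M2 -> disjoint M1 M2 ->
  partial_frame M1 M2 k p p' -> saturated M1 k p' ->
  independent inc s -> clique (lset s) -> subset (lset s) R -> length s <= k.
Proof.
  intro k. induction k as [k IH] using lt_wf_ind.
  intros R M1 M2 p p' s HR H1 H2 Hd Hfr HA Hs Hsc HsR.
  destruct (clique_meets_side s HR H2 Hfr (saturated_sym H1 H2 Hd Hfr HA) Hs Hsc HsR)
    as [done|[q [Sq Mq]]]; [exact done|].
  destruct (exists_noncollinear q H1 (proj1 (proj2 (proj2 H2)) q Mq)
              (fun h => Hd q h Mq)) as [e [Me Heq]].
  set (R' := fun x => R x /\ col x e /\ col x q).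
  assert (H1' := residue_max_singular R M1 e q H1 Me Heq).
  assert (H2' : max_singular_in R' (fun x => M2 x /\ col x e)).
  { apply (max_singular_in_ext (fun x => R x /\ col x q /\ col x e));
      [intros x; unfold R'; tauto|].
    apply residue_max_singular; auto. intro h; apply Heq, collinear_sym, h. }
  assert (HR' : subspace inc R')
    by (apply subspace_inter; [|apply subspace_inter]; auto; apply perp_subspace_r).
  assert (Hd' : disjoint (fun x => M1 x /\ col x q) (fun x => M2 x /\ col x e))
    by (intros x [a _] [b _]; apply (Hd x); auto).
  assert (bound := residue_frame_bound e q H1 Hfr HA Me Mq Heq).
  destruct (saturated_frame_exists e k H2' (proj1 (proj2 (proj2 H1'))) Hd')
    as [k2 [p2 [p2' [hf hA]]]]; [intros k2 p2 p2' h; specialize (bound _ _ _ h); lia|].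
  assert (hk2 := bound _ _ _ hf).
  destruct (hyperplane_section s e Hs Hsc) as [t [ht [hts [hte hl]]]].
  assert (tR : subset (lset t) R').
  { intros x hx. split; [apply (span_min _ _ HR HsR), hts, hx|]. split; [apply hte, hx|].
    apply (span_clique _ Hsc); [apply hts, hx|exact Sq]. }
  assert (tc : clique (lset t))
    by (intros a b ha hb; apply (span_clique _ Hsc); apply hts; auto).
  assert (IHt := IH k2 ltac:(lia) R' _ _ p2 p2' t HR' H1' H2' Hd' hf hA ht tc tR).
  lia.
Qed.

Lemma saturated_frame_basis {M1 M2 k p p'} : max_singular inc M1 ->
  partial_frame M1 M2 k p p' -> saturated M1 k p' -> basis_of inc M1 (first_points k p).
Proof.
  intros [[HS HC] _] Hfr HA. split; [exact (partial_frame_independent Hfr)|].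
  intros x; split; intros hx; [|exact (saturated_spans HS HC Hfr HA x hx)].
  revert x hx. apply span_min; [exact HS|].
  intros x hx. destruct (first_points_inv k p x hx) as [i [hi ->]]. apply (proj1 Hfr i hi).
Qed.

(* Every nice subspace of a polar space of rank n has a frame: a saturated
   partial frame of its two disjoint maximal singular subspaces has size at
   most n (its points are independent in a singular subspace) and at least
   n (by rank comparison with a singular subspace of rank n). *)
Lemma frame_exists n (d : Point) (Y : pset Point) : has_rank inc n -> nice inc Y ->
  exists p p', frame_of inc n Y p p'.
Proof.
  intros [[S0 [l [HS0 [[Hl Hsl] Hlen]]]] Hub] [_ [M1 [M2 [HM1 [HM2 [H1Y [H2Y Hd]]]]]]].
  assert (R1 := max_singular_in_full M1 HM1).
  assert (R2 := max_singular_in_full M2 HM2).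
  assert (bnd : forall k p p', partial_frame M1 M2 k p p' -> k <= n).
  { intros k p p' hf. rewrite <- (first_points_length k p).
    apply (Hub M1); [exact (proj1 HM1)|exact (partial_frame_independent hf)|].
    intros x hx. destruct (first_points_inv k p x hx) as [i [hi ->]]. apply (proj1 hf i hi). }
  destruct (saturated_frame_exists d n R2 (proj1 (proj2 (proj2 R1))) Hd bnd)
    as [k [p [p' [hf hA]]]].
  assert (hl : length l <= k).
  { apply (clique_rank_le_frame k (@fullset Point) M1 M2 p p' l); auto;
      [intros L a b _ _ _ _ _ r _; exact I| |intros x _; exact I].
    intros a b ha hb. apply (proj2 HS0); apply (proj1 (Hsl _)); apply span_incl; auto. }
  assert (Hk : k = n) by (specialize (bnd _ _ _ hf); lia). subst k.
  exists p, p', M1, M2.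
  exact (conj HM1 (conj HM2 (conj H1Y (conj H2Y (conj Hd
          (conj (saturated_frame_basis HM1 hf hA)
          (conj (saturated_frame_basis HM2 (partial_frame_sym hf)
                   (saturated_sym R1 R2 Hd hf hA))
                (proj2 hf)))))))).
Qed.

End PolarGeometry.

Theorem lemma3 (Point Line : Type) (inc : Point -> Line -> Prop) (n : nat)
  (Hgeom : polar_space inc) (Hnd : nondegenerate inc)
  (Hrank : has_rank inc n) (Hn : 2 <= n) (Hthick : no_thin_lines inc)
  (X : nat -> pset Point)
  (Hnice : forall k, nice inc (X k))
  (Hnice_om : nice inc (@fullset Point))
  (Hincr : forall k m, k < m -> subset (X k) (X m) /\ ~ subset (X m) (X k))
  (Hincr_om : forall k, ~ subset (@fullset Point) (X k))
  (Hwo : well_ordered_chain inc (omega_chain X)) :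
  (maximal_among_wo_chains inc (omega_chain X) <->
   maximal_among_chains inc (omega_chain X)) /\
  (maximal_among_chains inc (omega_chain X) <->
   ((forall p p', frame_of inc n (X 0) p p' ->
        seteq (span inc (frame_points n p p')) (X 0)) /\
    (forall k, maximal_proper_subspace inc (X k) (X (S k))) /\
    (forall x, exists k, X k x))).
Proof.
  assert (Hchain : chain inc (omega_chain X)) by exact (proj1 Hwo).
  assert (Hframes : forall Y, nice inc Y -> exists p p', frame_of inc n Y p p').
  { pose proof Hrank as [[S0 [[|d l] [_ [_ Hlen]]]] _]; [simpl in Hlen; lia|].
    intros Y HY. exact (frame_exists Hgeom n d Y Hrank HY). }
  split; [exact (maximal_wo_iff_maximal _ Hwo)|split].
  - intros Hmax. split; [|split].
    + exact (maximal_base_spanned X Hnice Hincr Hincr_om Hchain Hmax n).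
    + exact (maximal_covering X Hnice Hincr Hincr_om Hchain Hmax).
    + exact (maximal_exhaustive X Hnice Hincr Hchain Hmax).
  - intros [Hspan [Hcov Hexh]] D HD HCD Z HZ.
    assert (HZnice := proj1 HD Z HZ).
    assert (cmp := extension_comparable _ D Z HD HCD HZ).
    destruct (cmp (X 0) (or_introl (ex_intro _ 0 eq_refl))) as [h0|h0].
    + exact (member_above_base X Hcov Hexh Z (proj1 HZnice) h0 cmp).
    + exact (member_below_base X n Z Hspan (Hframes Z HZnice) (proj1 HZnice) h0).
Qed.
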